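(* Let $M$ be a canonical linear LV-SEM-ME satisfying Conventional faithfulness and Minimality, with mixing matrix $\mathbf W^*$. Then: (a) An mleaf variable and a measured cogent variable belong to the same ancestral ordered group if and only if the two rows of $\mathbf W^*$ corresponding to these variables have the same support. Further, for any cogent variable $V_i$ and any descendant $V_j$ of $V_i$, the support of the row of $V_i$ is a subset of the support of the row of $V_j$. (b) An unobserved variable and a cogent variable belong to the same ancestral ordered group if and only if the two columns of $\mathbf W^*$ corresponding to their exogenous noise terms have the same support. Further, for any cogent variable $V_i$ and any ancestor $V_j$ of $V_i$, the support of the column of $N_{V_i}$ is a subset of the support of the column of $N_{V_j}$.
   Context: Model. A linear LV-SEM-ME has a finite set of variables $\mathcal V$ and a set of measurements $\mathcal X$. The variables in $\mathcal V$ admit a causal order; each $V_i\in\mathcal V$ satisfies $V_i=\sum_{V_j\in Pa(V_i)} a_{ij}V_j+N_{V_i}$ with $Pa(V_i)\subseteq\mathcal V$ its direct parents and jointly independent exogenous noises. $\mathcal V$ is partitioned into $\mathcal Y$ (observed without error), $\mathcal Z$ (measured with error) and $\mathcal H$ (unobserved). Each $Z_i\in\mathcal Z$ has one measurement $X_i=Z_i+N_{X_i}$ with independent errors. The causal diagram is the DAG on $\mathcal V\cup\mathcal X$ with an edge $W_1\to W_2$ iff $W_1$ is a direct parent of $W_2$. An mleaf variable is a $Z_i\in\mathcal Z$ whose only child is $X_i$; $\mathcal Z^L$ is their set. A cogent variable is a variable of $\mathcal Z\cup\mathcal Y$ that is not mleaf; $\mathcal V^C$ is their set. The model is canonical if every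 $H\in\mathcal H$ has no parents and at least two children, and every mleaf variable has zero exogenous noise. Observability indicators record which observed coordinates are in $\mathcal Y$ and which in $\mathcal X$. Mixing matrices. $\mathbf W^*$ has rows indexed by $\mathcal Z\cup\mathcal Y$ and columns by the noises of $\mathcal H\cup\mathcal V^C$; the entry (row $V$, column $N_U$) is the total causal effect of $U$ on $V$ ($1$ if $U=V$). The overall mixing matrix $\mathbf W=[\mathbf W^*,\,[\mathbf I;\mathbf 0]]$ maps all independent noises (identity block = measurement errors) to $(X,Y)$. Assumptions. Conventional faithfulness: the total causal effect of any $V_i\in\mathcal V$ on any of its descendants is nonzero. Minimality: there is no other linear LV-SEM-ME with strictly fewer unobserved variables, the same observability indicators and the same mixing matrix up to permutation and scaling of columns. AOG. The ancestral ordered grouping is the partition of $\mathcal H\cup\mathcal Z^L\cup\mathcal V^C$: each cogent variable in its own group; each mleaf $Z_j$ that has a measured cogent parent $Z_i$ such that $Z_j$ has no other parents or all other parents of $Z_j$ are ancestors of $Z_i$ is put in the group of $Z_i$, otherwise in a separate group; each $H_j\in\mathcal H$ that has a cogent child $V_i$ such that all other children of $H_j$ are descendants of $V_i$ is put in the group of $V_i$, otherwise in a separate group. The groups are called ancestral ordered groups. *)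

From HB Require Import structures.
From mathcomp Require Import all_boot all_order all_algebra.
Set Implicit Arguments. Unset Strict Implicit. Unset Printing Implicit Defensive.
Import Order.TTheory GRing.Theory Num.Theory.
Local Open Scope ring_scope.

(* Kind of a variable of V: observed without error (Y), measured with
   error (Z), or unobserved (H). *)
Inductive vkind := KY | KZ | KH.

(* A linear LV-SEM-ME with n variables V = 'I_n and p observed coordinates.
   - par i j  : V_j is a direct parent of V_i;
   - coef i j : the coefficient a_ij (must vanish when V_j is not a parent);
   - kind     : the partition of V into Y, Z, H;
   - obs k    : the variable observed at observed coordinate k
                (Y_k itself if kind = KY, or Z_k via its measurement X_k). *)
Record LVSEMME (R : realFieldType) (n p : nat) := MkLVSEMME {
  par : rel 'I_n;
  coef : 'M[R]_n;
  kind : 'I_n -> vkind;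
  obs : 'I_p -> 'I_n }.

Section Defs.
Context {R : realFieldType} {n p : nat} (M : LVSEMME R n p).

Definition isY (v : 'I_n) : bool := if kind M v is KY then true else false.
Definition isZ (v : 'I_n) : bool := if kind M v is KZ then true else false.
Definition isH (v : 'I_n) : bool := if kind M v is KH then true else false.

Definition edge : rel 'I_n := fun u v => par M v u.
Definition desc (u v : 'I_n) : bool := connect edge u v.

Definition wf : Prop :=
  [/\ (exists rk : 'I_n -> nat, forall i j, par M i j -> (rk j < rk i)%N),
      (forall i j, ~~ par M i j -> coef M i j = 0),
      injective (obs M),
      (forall v, ~~ isH v -> exists k, obs M k = v)
    & (forall k, ~~ isH (obs M k))].

(* mleaf: Z_i whose only child (in the diagram) is X_i *)
Definition mleaf (z : 'I_n) : bool := isZ z && [forall v, ~~ par M v z].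
Definition cogent (v : 'I_n) : bool := ~~ isH v && ~~ mleaf v.

(* canonical (structural part; the zero-noise condition on mleaf variables
   is built into the mixing matrix, which has no columns for their noises) *)
Definition canonical : Prop :=
  (forall h, isH h -> forall j, ~~ par M h j) /\
  (forall h, isH h -> (1 < #|[set v | par M v h]|)%N).

(* total causal effects: teff v u = total causal effect of u on v *)
Definition teff : 'M[R]_n := invmx (1%:M - coef M).

(* variables whose noise indexes a column of W^* *)
Definition inWcol (u : 'I_n) : bool := isH u || cogent u.

(* support of the row of V in W^* (as a set of noise indices) *)
Definition rowsupp (v : 'I_n) : {set 'I_n} := [set u | inWcol u & teff v u != 0].
(* support of the column of N_U in W^* (as a set of row indices) *)
Definition colsupp (u : 'I_n) : {set 'I_n} := [set v | ~~ isH v & teff v u != 0].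

Definition conv_faithful : Prop :=
  forall i j, i != j -> desc i j -> teff j i != 0.

Definition aog_mleaf_cand (z c : 'I_n) : bool :=
  [&& isZ c, cogent c, par M z c &
      [forall q, (par M z q && (q != c)) ==> desc q c]].
Definition aog_hid_cand (h c : 'I_n) : bool :=
  [&& cogent c, par M c h &
      [forall k, (par M k h && (k != c)) ==> desc c k]].
Definition aog_rep (v : 'I_n) : 'I_n :=
  if cogent v then v
  else if mleaf v then odflt v [pick c | aog_mleaf_cand v c]
  else if isH v then odflt v [pick c | aog_hid_cand v c]
  else v.
Definition same_aog (u v : 'I_n) : bool := aog_rep u == aog_rep v.

(* Overall mixing matrix W = [W^*, [I;0]]: rows = observed coordinates,
   columns indexed by inl u (noise N_U, u ∈ H ∪ V^C) and inr z
   (measurement error N_{X_z}, z ∈ Z). *)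
Definition validcol (x : 'I_n + 'I_n) : bool :=
  match x with inl u => inWcol u | inr z => isZ z end.
Definition Wentry (k : 'I_p) (x : 'I_n + 'I_n) : R :=
  match x with
  | inl u => teff (obs M k) u
  | inr z => if obs M k == z then 1 else 0
  end.

Definition nH : nat := #|[set v | isH v]|.
End Defs.

(* M and M' have the same mixing matrix up to permutation and (nonzero)
   scaling of columns. *)
Definition same_mixing {R : realFieldType} {n n' p : nat}
  (M : LVSEMME R n p) (M' : LVSEMME R n' p) : Prop :=
  exists (f : 'I_n + 'I_n -> 'I_n' + 'I_n') (g : 'I_n' + 'I_n' -> 'I_n + 'I_n)
         (c : 'I_n + 'I_n -> R),
    (forall x, validcol M x ->
       [/\ validcol M' (f x), g (f x) = x, c x != 0 &
           forall k, Wentry M' k (f x) = c x * Wentry M k x]) /\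
    (forall y, validcol M' y -> validcol M (g y) /\ f (g y) = y).

Definition same_obs_ind {R : realFieldType} {n n' p : nat}
  (M : LVSEMME R n p) (M' : LVSEMME R n' p) : Prop :=
  forall k, isY M (obs M k) = isY M' (obs M' k).

Definition minimal {R : realFieldType} {n p : nat} (M : LVSEMME R n p) : Prop :=
  forall (n' : nat) (M' : LVSEMME R n' p),
    wf M' -> canonical M' -> same_obs_ind M M' -> same_mixing M M' ->
    ~ (nH M' < nH M)%N.

From mathcomp Require Import all_boot all_order all_algebra.
From mathcomp Require Import zify.
Set Implicit Arguments. Unset Strict Implicit. Unset Printing Implicit Defensive.
Import Order.TTheory GRing.Theory Num.Theory.
Local Open Scope ring_scope.

(* The coefficient matrix A is supported on the edges of a DAG, so the
   total-effect matrix (1 - A)^-1 has unit diagonal and is supported on the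
   ancestor relation; faithfulness gives the converse.  Hence the row of V in
   W^* is supported exactly on the ancestors of V in H ∪ V^C, and the column
   of N_U exactly on the observed descendants of U, and the inclusions are
   transitivity of ancestry.  An mleaf Z lies outside H ∪ V^C while all its
   parents lie inside, so Z and a cogent C have the same ancestors there iff C
   is a parent of Z of which every parent of Z is an ancestor: this is the AOG
   rule.  The hidden case is the same statement in the reversed graph, since
   in a canonical model every child of an unobserved variable is observed. *)

Section RankedRelation.
Variables (T : finType) (e : rel T) (rk : T -> nat).
Hypothesis rk_edge : forall x y, e x y -> (rk x < rk y)%N.

Lemma connect_rank x y : connect e x y -> (rk x <= rk y)%N.
Proof.
case/connectP=> s; elim: s x => [|z s IHs] x /=; first by move=> _ ->.
case/andP=> /rk_edge lt_xz /IHs le_zy /le_zy; exact/leq_trans/ltnW.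
Qed.

Lemma connect_rank_antisym : antisymmetric (connect e).
Proof.
move=> x y /andP[/connectP[[|z s] /=]]; first by move=> _ ->.
case/andP=> /rk_edge lt_xz pzs y_last /connect_rank le_yx.
have : (rk z <= rk y)%N by rewrite y_last; apply/connect_rank/connectP; exists s.
lia.
Qed.

Lemma rank_ind (P : T -> Prop) :
  (forall x, (forall y, e x y -> P y) -> P x) -> forall x, P x.
Proof.
move=> IH x; have [m lt_xm] := ubnP (\max_y rk y - rk x)%N.
elim: m x lt_xm => // m IHm x lt_xm; apply: IH => y /rk_edge lt_xy.
apply: IHm; have := leq_bigmax (F := rk) y; lia.
Qed.

End RankedRelation.

Lemma connect_last (T : finType) (e : rel T) x y :
  connect e x y -> x != y -> exists2 z, connect e x z & e z y.
Proof.
case/connectP=> s; elim/last_ind: s => [|s z _] /=.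
  by move=> _ ->; rewrite eqxx.
rewrite rcons_path last_rcons => /andP[pxs ezy] -> _.
by exists (last x s) => //; apply/connectP; exists s.
Qed.

Section AncestorSets.
Variables (T : finType) (e : rel T) (S : pred T).
Hypothesis connect_antisym : antisymmetric (connect e).

Lemma anc_set_eq_iff z c : ~~ S z -> (forall q, e q z -> S q) -> S c ->
  [set x | S x & connect e x z] = [set x | S x & connect e x c] <->
  e c z /\ (forall q, e q z -> connect e q c).
Proof.
move=> Sz S_par Sc; split=> [anc_eq | [ecz par_c]].
  have anc_zc x : S x -> connect e x z = connect e x c.
    by move=> Sx; move/setP/(_ x): anc_eq; rewrite !inE Sx.
  have par_c q : e q z -> connect e q c.
    by move=> eqz; rewrite -anc_zc ?S_par ?connect1.
  have czc : connect e c z by rewrite anc_zc ?connect0.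
  have [|q cq eqz] := connect_last czc; first by apply: contraNneq Sz => <-.
  split=> //; have <- // : q = c.
  by apply: connect_antisym; rewrite par_c.
apply/setP=> x; rewrite !inE; case Sx: (S x) => //=; apply/idP/idP => [cxz|cxc].
  have [|q cxq eqz] := connect_last cxz; first by apply: contraNneq Sz => <-.
  exact: connect_trans cxq (par_c q eqz).
exact: connect_trans cxc (connect1 ecz).
Qed.

End AncestorSets.

Lemma desc_set_eq_iff (T : finType) (e : rel T) (S : pred T) h c :
  antisymmetric (connect e) -> ~~ S h -> (forall k, e h k -> S k) -> S c ->
  [set x | S x & connect e h x] = [set x | S x & connect e c x] <->
  e h c /\ (forall k, e h k -> connect e c k).
Proof.
move=> connect_antisym Sh S_child Sc.
have antisym_rev : antisymmetric (connect [rel x y | e y x]).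
  by move=> x y; rewrite !connect_rev /= andbC; apply: connect_antisym.
have rev_set y : [set x | S x & connect [rel x y | e y x] x y] =
                  [set x | S x & connect e y x].
  by apply/setP=> x; rewrite !inE connect_rev.
rewrite -!rev_set (anc_set_eq_iff antisym_rev Sh S_child Sc) /=.
by split=> -[ehc max_c]; split=> // k /max_c; rewrite connect_rev.
Qed.

Section DagMatrix.
Variables (F : fieldType) (n : nat) (e : rel 'I_n) (rk : 'I_n -> nat).
Variable A : 'M[F]_n.
Hypothesis rk_edge : forall x y, e x y -> (rk x < rk y)%N.
Hypothesis A_edge : forall i j, ~~ e j i -> A i j = 0.

Lemma unitmx_1subr_dag : 1%:M - A \in unitmx.
Proof.
rewrite -row_free_unit; apply: inj_row_free => x.
rewrite mulmxBr mulmx1 => /eqP; rewrite subr_eq0 => /eqP x_fixed.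
apply/rowP=> u; rewrite [RHS]mxE; elim/(rank_ind rk_edge): u => u IH.
rewrite x_fixed mxE big1 // => w _.
have [euw|/A_edge->] := boolP (e u w); last by rewrite mulr0.
by rewrite IH // mul0r.
Qed.

Lemma invmx_1subr_dagE v u :
  invmx (1%:M - A) v u = (v == u)%:R + \sum_w invmx (1%:M - A) v w * A w u.
Proof.
have : invmx (1%:M - A) *m (1%:M - A) = 1%:M by rewrite mulVmx ?unitmx_1subr_dag.
rewrite mulmxBr mulmx1 => /eqP; rewrite subr_eq addrC => /eqP {1}->.
by rewrite !mxE.
Qed.

Lemma invmx_1subr_dag_neq0 v u : invmx (1%:M - A) v u != 0 -> connect e u v.
Proof.
elim/(rank_ind rk_edge): u => u IH; rewrite invmx_1subr_dagE.
have [-> _|_] := eqVneq v u; first exact: connect0.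
rewrite add0r; apply: contraLR => no_path; rewrite negbK; apply/eqP/big1 => w _.
have [euw|/A_edge->] := boolP (e u w); last by rewrite mulr0.
apply/eqP; rewrite mulf_eq0; apply/orP; left; apply: contraNT no_path.
by move/(IH _ euw); apply: connect_trans; apply: connect1.
Qed.

Lemma invmx_1subr_dag_diag v : invmx (1%:M - A) v v = 1.
Proof.
rewrite invmx_1subr_dagE eqxx big1 ?addr0 // => w _.
have [evw|/A_edge->] := boolP (e v w); last by rewrite mulr0.
case: (eqVneq (invmx (1%:M - A) v w) 0) => [->|]; first by rewrite mul0r.
move/invmx_1subr_dag_neq0/(connect_rank rk_edge) => le_wv.
by have := rk_edge evw; rewrite ltnNge le_wv.
Qed.

End DagMatrix.

Lemma odflt_pick_uniq (T : finType) (P : pred T) x c :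
  (forall a b, P a -> P b -> a = b) -> x != c ->
  (odflt x [pick y | P y] == c) = P c.
Proof.
move=> P_uniq neq_xc; case: pickP => [y Py|noP] /=.
  by apply/eqP/idP => [<- //|Pc]; apply: P_uniq.
by rewrite (negbTE neq_xc) noP.
Qed.

Section Model.
Variables (R : realFieldType) (n p : nat) (M : LVSEMME R n p) (rk : 'I_n -> nat).
Hypothesis rk_par : forall i j, par M i j -> (rk j < rk i)%N.

Let rk_edge u v : edge M u v -> (rk u < rk v)%N := @rk_par v u.

Lemma desc_antisym : antisymmetric (desc M).
Proof. exact: connect_rank_antisym rk_edge. Qed.

Lemma inWcol_par u v : par M v u -> inWcol M u.
Proof.
move=> pvu; rewrite /inWcol /cogent; case: (isH M u) => //=.
by apply/nandP; right; apply/forallP => /(_ v); rewrite pvu.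
Qed.

Lemma same_aog_mleafE z c :
  mleaf M z -> cogent M c -> same_aog M z c = aog_mleaf_cand M z c.
Proof.
move=> mz cc; have ncz : ~~ cogent M z by rewrite /cogent mz andbF.
rewrite /same_aog /aog_rep (negbTE ncz) mz cc.
rewrite odflt_pick_uniq //; last first.
  by apply: contraNneq ncz => ->.
move=> a b /and4P[_ _ pza /forallP a_max] /and4P[_ _ pzb /forallP b_max].
have [//|neq_ab] := eqVneq a b; apply: desc_antisym.
by rewrite (implyP (b_max a)) ?(implyP (a_max b)) ?pza ?pzb // eq_sym.
Qed.

Lemma same_aog_hidE h c :
  isH M h -> cogent M c -> same_aog M h c = aog_hid_cand M h c.
Proof.
move=> hh cc; have nch : ~~ cogent M h by rewrite /cogent hh.
have nmh : ~~ mleaf M h by move: hh; rewrite /mleaf /isZ /isH; case: (kind M h).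
rewrite /same_aog /aog_rep (negbTE nch) (negbTE nmh) hh cc.
rewrite odflt_pick_uniq //; last first.
  by apply: contraNneq nch => ->.
move=> a b /and3P[_ pah /forallP a_max] /and3P[_ pbh /forallP b_max].
have [//|neq_ab] := eqVneq a b; apply: desc_antisym.
by rewrite (implyP (a_max b)) ?(implyP (b_max a)) ?pah ?pbh // eq_sym.
Qed.

Hypothesis coef_par : forall i j, ~~ par M i j -> coef M i j = 0.
Hypothesis faithful : conv_faithful M.

Lemma teff_neq0 u v : (teff M v u != 0) = desc M u v.
Proof.
apply/idP/idP; first exact: invmx_1subr_dag_neq0 rk_edge coef_par v u.
have [-> _|neq_uv] := eqVneq u v.
  by rewrite /teff (invmx_1subr_dag_diag rk_edge coef_par) oner_neq0.
exact: faithful.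
Qed.

Lemma rowsuppE v : rowsupp M v = [set u | inWcol M u & desc M u v].
Proof. by apply/setP => u; rewrite !inE teff_neq0. Qed.

Lemma colsuppE u : colsupp M u = [set v | ~~ isH M v & desc M u v].
Proof. by apply/setP => v; rewrite !inE teff_neq0. Qed.

Lemma rowsupp_desc i j : desc M i j -> rowsupp M i \subset rowsupp M j.
Proof.
move=> dij; rewrite !rowsuppE; apply/subsetP => u; rewrite !inE.
by case/andP=> -> /connect_trans; apply.
Qed.

Lemma colsupp_desc i j : desc M j i -> colsupp M i \subset colsupp M j.
Proof.
move=> dji; rewrite !colsuppE; apply/subsetP => v; rewrite !inE.
by case/andP=> -> /(connect_trans dji).
Qed.

Lemma same_aog_mleaf_rowsupp z c : mleaf M z -> isZ M c -> cogent M c ->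
  same_aog M z c <-> rowsupp M z = rowsupp M c.
Proof.
move=> mz zc cc; rewrite same_aog_mleafE // !rowsuppE.
have nWz : ~~ inWcol M z.
  rewrite /inWcol /cogent mz andbF orbF.
  by move: mz; rewrite /mleaf /isZ /isH; case: (kind M z).
have Wc : inWcol M c by rewrite /inWcol cc orbT.
apply: iff_trans
  (iff_sym (anc_set_eq_iff desc_antisym nWz (@inWcol_par^~ z) Wc)).
rewrite /aog_mleaf_cand zc cc /=; split=> [/andP[pzc /forallP c_max]|[pzc c_max]].
  split=> // q; rewrite /edge => pzq; have [->|neq_qc] := eqVneq q c.
    exact: connect0.
  by apply: (implyP (c_max q)); rewrite pzq.
by apply/andP; split=> //; apply/forallP => q; apply/implyP => /andP[/c_max].
Qed.

Hypothesis H_parentless : forall h, isH M h -> forall j, ~~ par M h j.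

Lemma same_aog_hid_colsupp h c : isH M h -> cogent M c ->
  same_aog M h c <-> colsupp M h = colsupp M c.
Proof.
move=> hh cc; rewrite same_aog_hidE // !colsuppE.
have nnHh : ~~ ~~ isH M h by rewrite hh.
have nH_child k : edge M h k -> ~~ isH M k.
  by move=> pkh; apply/negP => /H_parentless/(_ h)/negP; apply.
have nHc : ~~ isH M c by case/andP: cc.
apply: iff_trans (iff_sym (desc_set_eq_iff desc_antisym nnHh nH_child nHc)).
rewrite /aog_hid_cand cc /=; split=> [/andP[pch /forallP c_min]|[pch c_min]].
  split=> // k; rewrite /edge => pkh; have [->|neq_kc] := eqVneq k c.
    exact: connect0.
  by apply: (implyP (c_min k)); rewrite pkh.
by apply/andP; split=> //; apply/forallP => k; apply/implyP => /andP[/c_min].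
Qed.

End Model.

Theorem proposition4 (R : realFieldType) (n p : nat) (M : LVSEMME R n p) :
  wf M -> canonical M -> conv_faithful M -> minimal M ->
  [/\ (forall z c, mleaf M z -> isZ M c -> cogent M c ->
         (same_aog M z c <-> rowsupp M z = rowsupp M c)),
      (forall i j, cogent M i -> desc M i j ->
         rowsupp M i \subset rowsupp M j),
      (forall h c, isH M h -> cogent M c ->
         (same_aog M h c <-> colsupp M h = colsupp M c))
    & (forall i j, cogent M i -> desc M j i ->
         colsupp M i \subset colsupp M j)].
Proof.
move=> [[rk rk_par] coef_par _ _ _] [H_parentless _] faithful _.
split=> [z c | i j _ | h c | i j _].
- exact: same_aog_mleaf_rowsupp rk_par coef_par faithful z c.
- exact: rowsupp_desc rk_par coef_par faithful i j.
- exact: same_aog_hid_colsupp rk_par coef_par faithful H_parentless h c.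
- exact: colsupp_desc rk_par coef_par faithful i j.
Qed.
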